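(* In the setting described in the context (with $L=[0,1]$), let $q\in\{1,\dots,n\}$ and assume there exists $A\subseteq\mathcal C$ with $|A|=n-q$ and $\nu_q(A)=0$. Define $\mu_*:2^{\mathcal C}\to[0,1]$ by $\mu_*(\mathcal C)=1$, $\mu_*(X)=\nu_q(X)$ if $n-q\le|X|<n$, and $\mu_*(X)=\min_{Y\supsetneq X,\ n-q\le|Y|<n}\nu_q(Y)$ if $|X|<n-q$. Then $\mu_*$ is the lowest (pointwise) among all $q$-minitive capacities $\mu:2^{\mathcal C}\to[0,1]$ satisfying $\max_{1\le k\le N}|S_\mu(x^{(k)})-\alpha^{(k)}|=\nabla_q$.
   Context: Let $\mathcal C=\{1,\dots,n\}$ and $L=[0,1]$. A capacity is a map $\mu:2^{\mathcal C}\to[0,1]$ with $\mu(\emptyset)=0$, $\mu(\mathcal C)=1$, monotone for inclusion; it is $q$-minitive if for all $X$ with $|X|<n-q$, $\mu(X)=\min_{Y\supsetneq X,\ |Y|\ge n-q}\mu(Y)$. Sugeno integral: $S_\mu(x)=\max_{A\subseteq\mathcal C}\min(\min_{i\in A}x_i,\mu(A))$ with $\min_{i\in\emptyset}x_i=1$. Training data: $N$ pairs $(x^{(k)},\alpha^{(k)})$, $x^{(k)}\in[0,1]^n$, $\alpha^{(k)}\in[0,1]$. For $A\subsetneq\mathcal C$, $\gamma_{k,A}=\max_{i\in\mathcal C\setminus A}x^{(k)}_i$. Write $t^+=\max(t,0)$. For $1\le i\le N$ and $A\subsetneq\mathcal C$ with $|A|\ge n-q$, let $\sigma_\epsilon(\alpha^{(i)},\gamma_{l,A},\alpha^{(l)})=\min\big(\tfrac{(\alpha^{(l)}-\alpha^{(i)})^+}{2},(\alpha^{(l)}-\gamma_{l,A})^+\big)$,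 $\nabla_{i,A}=\max\big((\gamma_{i,A}-\alpha^{(i)})^+,\max_{1\le l\le N}\sigma_\epsilon(\alpha^{(i)},\gamma_{l,A},\alpha^{(l)})\big)$, $\nabla_i=\min_{A\subsetneq\mathcal C,\ |A|\ge n-q}\nabla_{i,A}$, and $\nabla_q=\max_{1\le i\le N}\nabla_i$. For $A\subsetneq\mathcal C$ with $|A|\ge n-q$, $\nu_q(A)=\max_{1\le k\le N}\big(\gamma_{k,A}\,\epsilon\,\max(\alpha^{(k)}-\nabla_q,0)\big)$, where $a\,\epsilon\,b=b$ if $a<b$ and $a\,\epsilon\,b=0$ if $a\ge b$. *)

(* R is an abstract real field, criteria are 'I_n, data indexed by 'I_N. *)
From HB Require Import structures.
From mathcomp Require Import all_boot all_order all_algebra.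
Set Implicit Arguments. Unset Strict Implicit. Unset Printing Implicit Defensive.
Import Order.TTheory GRing.Theory Num.Theory.
Local Open Scope ring_scope.

Section Defs.
Variables (R : realFieldType) (n N : nat).

Definition pos (t : R) : R := Num.max t 0.

Definition eps (a b : R) : R := if a < b then b else 0.

(* gamma_{k,A} = max_{i not in A} x^(k)_i  (A proper, so the range is nonempty) *)
Definition gamma (x : 'I_N -> 'I_n -> R) (k : 'I_N) (A : {set 'I_n}) : R :=
  \big[Num.max/0]_(i in ~: A) x k i.

Definition sigma_eps (ai g al : R) : R :=
  Num.min (pos (al - ai) / 2) (pos (al - g)).

Definition nablaIA (x : 'I_N -> 'I_n -> R) (alpha : 'I_N -> R)
    (i : 'I_N) (A : {set 'I_n}) : R :=
  Num.max (pos (gamma x i A - alpha i))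
          (\big[Num.max/0]_(l : 'I_N) sigma_eps (alpha i) (gamma x l A) (alpha l)).

(* minimum over the (nonempty, for 1 <= q) family of proper A with |A| >= n-q;
   all nablaIA values lie in [0,1] for data in [0,1], so the default 1 is neutral *)
Definition nablaI (q : nat) (x : 'I_N -> 'I_n -> R) (alpha : 'I_N -> R)
    (i : 'I_N) : R :=
  \big[Num.min/1]_(A : {set 'I_n} | (A != setT) && (n - q <= #|A|)%N)
     nablaIA x alpha i A.

Definition nablaQ (q : nat) (x : 'I_N -> 'I_n -> R) (alpha : 'I_N -> R) : R :=
  \big[Num.max/0]_(i : 'I_N) nablaI q x alpha i.

Definition nuQ (q : nat) (x : 'I_N -> 'I_n -> R) (alpha : 'I_N -> R)
    (A : {set 'I_n}) : R :=
  \big[Num.max/0]_(k : 'I_N)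
     eps (gamma x k A) (Num.max (alpha k - nablaQ q x alpha) 0).

Definition mu_star (q : nat) (x : 'I_N -> 'I_n -> R) (alpha : 'I_N -> R)
    (X : {set 'I_n}) : R :=
  if X == setT then 1
  else if (n - q <= #|X|)%N then nuQ q x alpha X
  else \big[Num.min/1]_(Y : {set 'I_n} | [&& X \proper Y, (n - q <= #|Y|)%N
                                          & (#|Y| < n)%N])
          nuQ q x alpha Y.

Definition capacity (mu : {set 'I_n} -> R) : Prop :=
  [/\ mu set0 = 0, mu setT = 1,
      (forall X, 0 <= mu X <= 1) &
      (forall X Y : {set 'I_n}, X \subset Y -> mu X <= mu Y)].

Definition q_minitive (q : nat) (mu : {set 'I_n} -> R) : Prop :=
  forall X : {set 'I_n}, (#|X| < n - q)%N ->
    mu X = \big[Num.min/1]_(Y : {set 'I_n} | (X \proper Y) && (n - q <= #|Y|)%N) mu Y.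

(* Sugeno integral, with min over the empty set equal to 1 *)
Definition sugeno (mu : {set 'I_n} -> R) (y : 'I_n -> R) : R :=
  \big[Num.max/0]_(A : {set 'I_n})
     Num.min (\big[Num.min/1]_(i in A) y i) (mu A).

Definition max_error (mu : {set 'I_n} -> R) (x : 'I_N -> 'I_n -> R)
    (alpha : 'I_N -> R) : R :=
  \big[Num.max/0]_(k : 'I_N) `|sugeno mu (x k) - alpha k|.

End Defs.

From HB Require Import structures.
From mathcomp Require Import all_boot all_order all_algebra.
From mathcomp Require Import lra.
Import Order.TTheory GRing.Theory Num.Theory.
Local Open Scope ring_scope.

(* The Sugeno integral of a q-minitive capacity mu has the dual form
     S_mu(y) = min { max (max_{i \notin A} y_i, mu A) : A <> C, |A| >= n - q }.
   If every error |S_mu(x^(k)) - alpha^(k)| is at most e, then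
   mu A >= alpha^(l) - e whenever gamma_{l,A} < alpha^(l) - e, and a set A
   realising the dual minimum for x^(i) has nabla_{i,A} <= e.  Hence every
   q-minitive capacity has error at least nabla_q, and with error nabla_q it
   dominates nu_q on the sets with |A| >= n - q.  Conversely, a set A with
   nabla_{i,A} <= nabla_q has nu_q(A) <= alpha^(i) + nabla_q, so mu_*, the least
   q-minitive extension of nu_q, has error exactly nabla_q.  The hypothesis
   nu_q(A) = 0 for some |A| = n - q is what makes mu_*(emptyset) = 0. *)

Section SugenoCapacityFit.
Local Set Implicit Arguments.
Local Unset Strict Implicit.
Variables (R : realFieldType) (n N : nat) (x : 'I_N -> 'I_n -> R).
Implicit Types (mu : {set 'I_n} -> R) (A B X Y : {set 'I_n}) (k : 'I_N).

Lemma le_gamma k A i : i \notin A -> x k i <= gamma x k A.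
Proof. by move=> iA; apply: le_bigmax_cond; rewrite inE. Qed.

Lemma gamma_ge0 k A : 0 <= gamma x k A.
Proof. exact: bigmax_ge_id. Qed.

Lemma gamma_le k A c :
  0 <= c -> (forall i, i \notin A -> x k i <= c) -> gamma x k A <= c.
Proof. by move=> c0 xc; apply: bigmax_le => // i; rewrite inE; apply: xc. Qed.

Lemma gamma_subset k A B : A \subset B -> gamma x k B <= gamma x k A.
Proof.
move=> AB; apply: gamma_le => [|i iB]; first exact: gamma_ge0.
by apply: le_gamma; apply: contra iB; apply: (subsetP AB).
Qed.

Lemma sugeno_ge0 mu (y : 'I_n -> R) : 0 <= sugeno mu y.
Proof. exact: bigmax_ge_id. Qed.

Lemma sugeno_le1 mu (y : 'I_n -> R) :
  (forall A, mu A <= 1) -> sugeno mu y <= 1.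
Proof.
by move=> mu_le1; apply: bigmax_le => // A _; rewrite ge_min mu_le1 orbT.
Qed.

Lemma sugeno_le_gamma mu k A : {homo mu : X Y / X \subset Y >-> X <= Y} ->
  sugeno mu (x k) <= Num.max (gamma x k A) (mu A).
Proof.
move=> mu_mono; apply: bigmax_le => [|B _]; first by rewrite le_max gamma_ge0.
have [BA|/subsetPn[i iB iA]] := boolP (B \subset A).
  by rewrite le_max !ge_min (mu_mono _ _ BA) !orbT.
rewrite le_max ge_min; apply/orP; left; apply/orP; left.
by apply: le_trans _ (le_gamma k iA); apply: bigmin_le_cond.
Qed.

Lemma sugeno_le_mu mu k A b : {homo mu : X Y / X \subset Y >-> X <= Y} ->
  b <= sugeno mu (x k) -> gamma x k A < b -> b <= mu A.
Proof.
move=> mu_mono bS gA; have := le_trans bS (sugeno_le_gamma k A mu_mono).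
by rewrite le_max leNgt gA.
Qed.

Lemma le_pos (t : R) : t <= pos t.
Proof. by rewrite /pos le_max lexx. Qed.

Lemma pos_le (t c : R) : 0 <= c -> t <= c -> pos t <= c.
Proof. by rewrite /pos ge_max => -> ->. Qed.

Definition layer (q : nat) A := (A != setT) && (n - q <= #|A|)%N.

Lemma neq_setT_card A : (A != setT) = (#|A| < n)%N.
Proof. by rewrite -properT properEcard subsetT cardsT card_ord. Qed.

Lemma layer_setC1 q (i : 'I_n) : (0 < q)%N -> layer q [set~ i].
Proof.
move=> q_gt0; rewrite /layer cardsC1 card_ord -subn1 leq_sub2l // andbT.
by apply/eqP => /setP/(_ i); rewrite !inE eqxx.
Qed.

Lemma layer_min_attained q (F : {set 'I_n} -> R) : (1 <= q <= n)%N ->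
    (forall A, layer q A -> F A <= 1) ->
  exists2 A, layer q A & \big[Num.min/1]_(B | layer q B) F B = F A.
Proof.
case/andP=> q_gt0 q_le_n F_le1.
pose i0 := Ordinal (leq_trans q_gt0 q_le_n).
have [A LA ->] := eq_bigmin _ _ F (layer_setC1 i0 q_gt0) F_le1.
by exists A.
Qed.

Lemma sugeno_minitive q mu k :
    {homo mu : X Y / X \subset Y >-> X <= Y} -> mu setT = 1 ->
    (forall A, mu A <= 1) -> q_minitive q mu ->
  sugeno mu (x k) =
    \big[Num.min/1]_(A | layer q A) Num.max (gamma x k A) (mu A).
Proof.
move=> mu_mono muT mu_le1 mu_qmin; apply/le_anti/andP; split.
  apply/bigmin_geP; split; first exact: sugeno_le1.
  by move=> A _; apply: sugeno_le_gamma.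
set b := \big[Num.min/1]_(A | _) _.
have [b_le0|b_gt0] := leP b 0; first exact: le_trans b_le0 (sugeno_ge0 _ _).
pose B := [set i | b <= x k i].
have gB : gamma x k B < b.
  by apply/bigmax_ltP; split => // i; rewrite !inE -ltNge.
have b_le_mu Y : B \subset Y -> (n - q <= #|Y|)%N -> b <= mu Y.
  move=> BY hY; have [->|YT] := eqVneq Y setT.
    by rewrite muT bigmin_le_id.
  have : b <= Num.max (gamma x k Y) (mu Y).
    by apply: bigmin_le_cond; rewrite /layer YT.
  by rewrite le_max leNgt (le_lt_trans (gamma_subset _ BY) gB).
apply: (@le_trans _ _ (Num.min (\big[Num.min/1]_(i in B) x k i) (mu B))).
  rewrite le_min; apply/andP; split.
    by apply/bigmin_geP; split => [|i]; [exact: bigmin_le_id | rewrite inE].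
  have [hB|hB] := leqP (n - q) #|B|; first exact: b_le_mu (subxx B) hB.
  rewrite (mu_qmin B hB); apply/bigmin_geP; split; first exact: bigmin_le_id.
  by move=> Y /andP[/proper_sub BY hY]; apply: b_le_mu.
exact: le_bigmax_cond.
Qed.

Variable alpha : 'I_N -> R.

Lemma nablaIA_le_error mu i A e : {homo mu : X Y / X \subset Y >-> X <= Y} ->
    (forall k, `|sugeno mu (x k) - alpha k| <= e) ->
    Num.max (gamma x i A) (mu A) <= alpha i + e ->
  nablaIA x alpha i A <= e.
Proof.
move=> mu_mono err; rewrite ge_max => /andP[gA muA].
have e0 : 0 <= e := le_trans (normr_ge0 _) (err i).
rewrite /nablaIA ge_max (pos_le e0) /=; last by lra.
apply: bigmax_le => // l _; rewrite /sigma_eps ge_min.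
have [gl|gl] := leP (alpha l - e) (gamma x l A).
  by rewrite pos_le ?orbT //; lra.
have : alpha l - e <= mu A.
  apply: sugeno_le_mu mu_mono _ gl.
  by have := err l; rewrite ler_norml => /andP[lo _]; lra.
move=> mu_lo; have : pos (alpha l - alpha i) <= e * 2 by apply: pos_le; lra.
by move=> h; apply/orP; left; lra.
Qed.

Variable q : nat.
Hypothesis q_range : (1 <= q <= n)%N.
Hypothesis x_01 : forall k i, 0 <= x k i <= 1.
Hypothesis alpha_01 : forall k, 0 <= alpha k <= 1.

Lemma gamma_le1 k A : gamma x k A <= 1.
Proof. by apply: gamma_le => // i _; case/andP: (x_01 k i). Qed.

Lemma nablaQ_le_max_error mu :
    {homo mu : X Y / X \subset Y >-> X <= Y} -> mu setT = 1 ->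
    (forall A, mu A <= 1) -> q_minitive q mu ->
  nablaQ q x alpha <= max_error mu x alpha.
Proof.
move=> mu_mono muT mu_le1 mu_qmin; set e := max_error mu x alpha.
have err k : `|sugeno mu (x k) - alpha k| <= e by apply: le_bigmax.
apply: bigmax_le => [|i _]; first exact: bigmax_ge_id.
have [A LA SA] : exists2 A, layer q A &
    sugeno mu (x i) = Num.max (gamma x i A) (mu A).
  rewrite (sugeno_minitive _ mu_mono muT mu_le1 mu_qmin).
  by apply: layer_min_attained => // B _; rewrite ge_max gamma_le1 mu_le1.
apply: le_trans (bigmin_le_cond _ _ LA) (nablaIA_le_error mu_mono err _).
by rewrite -SA; have := err i; rewrite ler_norml => /andP[_ hi]; lra.
Qed.

Local Notation nab := (nablaQ q x alpha).
Local Notation nu := (nuQ q x alpha).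
Local Notation mu_star := (mu_star q x alpha).

Lemma nab_ge0 : 0 <= nab.
Proof. exact: bigmax_ge_id. Qed.

Lemma nablaIA_le1 i A : nablaIA x alpha i A <= 1.
Proof.
have [a0 _] := andP (alpha_01 i); have gA := gamma_le1 i A.
rewrite /nablaIA ge_max pos_le //=; last by lra.
apply: bigmax_le => // l _; rewrite /sigma_eps ge_min pos_le ?orbT //.
by have [_ a1] := andP (alpha_01 l); have := gamma_ge0 l A; lra.
Qed.

Lemma nablaI_attained i :
  exists2 A, layer q A & nablaI q x alpha i = nablaIA x alpha i A.
Proof. by apply: layer_min_attained => // A _; apply: nablaIA_le1. Qed.

Lemma nu_ge0 A : 0 <= nu A.
Proof. exact: bigmax_ge_id. Qed.

Lemma nu_le1 A : nu A <= 1.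
Proof.
apply: bigmax_le => // k _; rewrite /eps; case: ifP => // _.
by rewrite ge_max ler01 andbT; have := nab_ge0; have := alpha_01 k; lra.
Qed.

Lemma nu_subset A B : A \subset B -> nu A <= nu B.
Proof.
move=> AB; apply: le_bigmax2 => k _; rewrite /eps.
case: ifP => [gA|_]; first by rewrite (le_lt_trans (gamma_subset _ AB) gA).
by case: ifP => // _; rewrite le_max lexx orbT.
Qed.

Lemma nu_ge_alpha k A : gamma x k A < alpha k - nab -> alpha k - nab <= nu A.
Proof.
move=> gA; apply: (bigmax_sup k) => //; rewrite /eps lt_max gA.
by rewrite le_max lexx.
Qed.

Lemma nu_le A c : 0 <= c ->
  (forall l, gamma x l A < alpha l - nab -> alpha l - nab <= c) -> nu A <= c.
Proof.
move=> c0 bound; apply: bigmax_le => // l _; rewrite /eps lt_max.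
case: ifP => // /orP[gA|]; last by rewrite ltNge gamma_ge0.
by rewrite ge_max c0 andbT; apply: bound.
Qed.

Lemma nu_le_alpha_nab k A :
  nablaIA x alpha k A <= nab -> nu A <= alpha k + nab.
Proof.
move=> kA; apply: nu_le => [|l gl].
  by have := nab_ge0; have := alpha_01 k; lra.
move: kA; rewrite /nablaIA ge_max => /andP[_ /bigmax_leP[_ /(_ l isT)]].
rewrite /sigma_eps ge_min => /orP[] h.
  by have := le_pos (alpha l - alpha k); lra.
by have := le_pos (alpha l - gamma x l A); lra.
Qed.

Lemma nu_le_capacity mu A : {homo mu : X Y / X \subset Y >-> X <= Y} ->
    (forall A, 0 <= mu A) -> (forall k, `|sugeno mu (x k) - alpha k| <= nab) ->
  nu A <= mu A.
Proof.
move=> mu_mono mu_ge0 err; apply: nu_le => // l gl.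
apply: sugeno_le_mu mu_mono _ gl.
by have := err l; rewrite ler_norml => /andP[lo _]; lra.
Qed.

Lemma mu_starT : mu_star setT = 1.
Proof. by rewrite /mu_star eqxx. Qed.

Lemma mu_star_layer A : layer q A -> mu_star A = nu A.
Proof. by case/andP=> AT hA; rewrite /mu_star (negPf AT) hA. Qed.

Lemma mu_star_below A : (#|A| < n - q)%N -> mu_star A =
  \big[Num.min/1]_(Y : {set 'I_n} |
                   [&& A \proper Y, (n - q <= #|Y|)%N & (#|Y| < n)%N]) nu Y.
Proof.
move=> hA; have AT : A != setT.
  by rewrite neq_setT_card (leq_trans hA) ?leq_subr.
by rewrite /mu_star (negPf AT) leqNgt hA.
Qed.

Lemma mu_star_le1 A : mu_star A <= 1.
Proof.
rewrite /mu_star; case: ifP => // _; case: ifP => _; first exact: nu_le1.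
exact: bigmin_le_id.
Qed.

Lemma mu_star_ge0 A : 0 <= mu_star A.
Proof.
rewrite /mu_star; case: ifP => // _; case: ifP => _; first exact: nu_ge0.
by apply/bigmin_geP; split => // Y _; apply: nu_ge0.
Qed.

Lemma mu_star_le_nu X Y : X \subset Y -> layer q Y -> mu_star X <= nu Y.
Proof.
move=> XY /andP[YT hY].
have [hX|hX] := leqP (n - q) #|X|.
  have XT : X != setT by apply: contraNneq YT => XT; rewrite -subTset -XT.
  by rewrite mu_star_layer ?nu_subset //; apply/andP.
rewrite mu_star_below //; apply: bigmin_le_cond.
by rewrite properEcard XY (leq_trans hX hY) hY -neq_setT_card YT.
Qed.

Lemma mu_star_subset X Y : X \subset Y -> mu_star X <= mu_star Y.
Proof.
move=> XY; have [->|YT] := eqVneq Y setT; first by rewrite mu_starT mu_star_le1.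
have [hY|hY] := leqP (n - q) #|Y|.
  have LY : layer q Y by apply/andP.
  by rewrite (mu_star_layer LY) mu_star_le_nu.
rewrite (mu_star_below hY); apply/bigmin_geP; split; first exact: mu_star_le1.
move=> Z /and3P[/proper_sub YZ hZ ZT]; apply: mu_star_le_nu.
  exact: subset_trans XY YZ.
by rewrite /layer neq_setT_card ZT.
Qed.

Lemma mu_star_q_minitive : q_minitive q mu_star.
Proof.
move=> X hX; rewrite (mu_star_below hX); apply/le_anti/andP; split.
  apply/bigmin_geP; split => [|Y /andP[XY hY]]; first exact: bigmin_le_id.
  have [->|YT] := eqVneq Y setT; first by rewrite mu_starT bigmin_le_id.
  have LY : layer q Y by apply/andP.
  rewrite (mu_star_layer LY); apply: bigmin_le_cond.
  by rewrite XY hY -neq_setT_card.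
apply/bigmin_geP; split => [|Y /and3P[XY hY YT]]; first exact: bigmin_le_id.
rewrite -mu_star_layer; last by rewrite /layer neq_setT_card YT.
by apply: bigmin_le_cond; rewrite XY.
Qed.

Lemma mu_star_capacity :
  (exists A, #|A| = (n - q)%N /\ nu A = 0) -> capacity mu_star.
Proof.
case=> A [cardA nuA0]; split=> [||X|]; last exact: mu_star_subset.
- apply/le_anti; rewrite mu_star_ge0 andbT -nuA0 mu_star_le_nu ?sub0set //.
  case/andP: q_range => q_gt0 q_le_n.
  rewrite /layer neq_setT_card cardA leqnn ltn_subrL q_gt0 andbT /=.
  exact: leq_trans q_gt0 q_le_n.
- exact: mu_starT.
- by rewrite mu_star_ge0 mu_star_le1.
Qed.

Lemma sugeno_mu_star k : sugeno mu_star (x k) =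
  \big[Num.min/1]_(A | layer q A) Num.max (gamma x k A) (nu A).
Proof.
rewrite (sugeno_minitive _ mu_star_subset mu_starT mu_star_le1
                         mu_star_q_minitive).
by apply: eq_bigr => A LA; rewrite mu_star_layer.
Qed.

Lemma mu_star_error k : `|sugeno mu_star (x k) - alpha k| <= nab.
Proof.
have nab0 := nab_ge0; have [a0 a1] := andP (alpha_01 k).
rewrite ler_norml; apply/andP; split.
  suff : alpha k - nab <= sugeno mu_star (x k) by lra.
  rewrite sugeno_mu_star; apply/bigmin_geP; split => [|A _]; first by lra.
  rewrite le_max; have [//|/nu_ge_alpha->] := leP (alpha k - nab) (gamma x k A).
  by rewrite orbT.
suff : sugeno mu_star (x k) <= alpha k + nab by lra.
have [A LA kA] := nablaI_attained k.
have kA_le : nablaIA x alpha k A <= nab by rewrite -kA; apply: le_bigmax.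
apply: le_trans (sugeno_le_gamma k A mu_star_subset) _.
rewrite mu_star_layer // ge_max nu_le_alpha_nab // andbT.
move: kA_le; rewrite /nablaIA ge_max => /andP[h _].
by have := le_pos (gamma x k A - alpha k); lra.
Qed.

Lemma max_error_mu_star : max_error mu_star x alpha = nab.
Proof.
apply/le_anti/andP; split.
  by apply: bigmax_le => [|k _]; [exact: nab_ge0 | exact: mu_star_error].
apply: nablaQ_le_max_error mu_star_subset mu_starT _ mu_star_q_minitive.
exact: mu_star_le1.
Qed.

Lemma mu_star_minimal mu : capacity mu -> q_minitive q mu ->
  max_error mu x alpha <= nab -> forall X, mu_star X <= mu X.
Proof.
case=> _ muT mu_01 mu_mono mu_qmin err X.
have mu_ge0 A : 0 <= mu A by case/andP: (mu_01 A).
have nu_le_mu A : nu A <= mu A.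
  apply: nu_le_capacity => // k.
  by apply: le_trans _ err; apply: le_bigmax.
have [->|XT] := eqVneq X setT; first by rewrite mu_starT muT.
have [hX|hX] := leqP (n - q) #|X|.
  have LX : layer q X by apply/andP.
  by rewrite (mu_star_layer LX).
rewrite (mu_qmin X hX); apply/bigmin_geP; split; first exact: mu_star_le1.
move=> Y /andP[/proper_sub XY hY].
have [->|YT] := eqVneq Y setT; first by rewrite muT mu_star_le1.
by apply: le_trans _ (nu_le_mu Y); apply: mu_star_le_nu => //; apply/andP.
Qed.

End SugenoCapacityFit.

Theorem corollary3 (R : realFieldType) (n N q : nat)
    (x : 'I_N -> 'I_n -> R) (alpha : 'I_N -> R) :
  (0 < N)%N ->
  (1 <= q <= n)%N ->
  (forall k i, 0 <= x k i <= 1) ->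
  (forall k, 0 <= alpha k <= 1) ->
  (exists A : {set 'I_n}, #|A| = (n - q)%N /\ nuQ q x alpha A = 0) ->
  [/\ capacity (mu_star q x alpha),
      q_minitive q (mu_star q x alpha),
      max_error (mu_star q x alpha) x alpha = nablaQ q x alpha &
      forall mu : {set 'I_n} -> R,
        capacity mu -> q_minitive q mu ->
        max_error mu x alpha = nablaQ q x alpha ->
        forall X : {set 'I_n}, mu_star q x alpha X <= mu X].
Proof.
move=> _ q_range x_01 alpha_01 nu_zero; split.
- exact: mu_star_capacity.
- exact: mu_star_q_minitive.
- exact: max_error_mu_star.
- move=> mu mu_cap mu_qmin err.
  by apply: mu_star_minimal => //; rewrite err.
Qed.
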